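(* Let $\widetilde{\mathcal R}\subseteq\mathcal R$ be finite and let $\mathcal R_1,\mathcal R_2$ be produced from $\widetilde{\mathcal R}$ by the selection procedure. Then: (i) $\mathcal R_1\sqcup\mathcal R_2=\widetilde{\mathcal R}$ and $\big|\bigcup_{R\in\mathcal R_2}R\big|\le 25\sum_{R\in\mathcal R_1}|R|$; (ii) whenever $R,R'\in\mathcal R_1$ are distinct, $R\cap R'\neq\emptyset$ and $L(R)\le L(R')$, we have $\mathrm{slope}(R)\not\supseteq\mathrm{slope}(R')$.
   Context: Dyadic model. Fix $0<\delta\le1$ and $w=2^{-m}$ for an integer $m\ge1$. All dyadic intervals are half-open, $[j2^{-k},(j+1)2^{-k})$. For $k\ge0$, $S_k$ is the set of dyadic subintervals of $[0,1)$ of length $2^{-k}$ (slopes); $c_s$ is the center of $s$. Let $u:[0,1)\to S_m$ be measurable. Let $\mathcal D$ be the dyadic intervals $I\subseteq[0,1)$ with $|I|\ge w$, $k(I)=\log_2(|I|/w)$, $\mathrm{Pop}_I(s)=\frac1{|I|}|\{x\in I:u(x)\subseteq s\}|$, $S(I)=\{s\in S_{k(I)}:\mathrm{Pop}_I(s)\ge\delta\}$. The parallelogram $P(I,s,b)=\{(x,y):x\in I,\ b\le y-c_sx<b+w\}$ ($I\in\mathcal D$, $s\in S_{k(I)}$, $b\in\mathbb R$) has $\mathrm{int}(P)=I$, $\mathrm{slope}(P)=s$, $L(P)=|I|$; $\mathcal R$ is the collection of these with $s\in S(I)$. For such $R$ with center $(x_0,y_0)$, $5R=\{(x,y):|x-x_0|\le\tfrac52|I|,\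 |y-y_0-c_s(x-x_0)|\le\tfrac52 w\}$. Selection procedure: start with $\mathcal R_1=\mathcal R_2=\emptyset$; while $\widetilde{\mathcal R}\ne\emptyset$, choose $R\in\widetilde{\mathcal R}$ of maximal length $L(R)$, move it from $\widetilde{\mathcal R}$ to $\mathcal R_1$, and then move to $\mathcal R_2$ every $R'\in\widetilde{\mathcal R}$ with $R'\subseteq\bigcup_{R''\in\mathcal R_1}5R''$. *)

From Stdlib Require Import Reals Lra Lia List ClassicalEpsilon Relations.
Open Scope R_scope.

Definition cover1 (A : R -> Prop) (v : R) : Prop :=
  exists a b : nat -> R,
    (forall n, a n <= b n) /\
    (forall x, A x -> exists n, a n <= x < b n) /\
    infinite_sum (fun n => b n - a n) v.

Definition is_outer1 (A : R -> Prop) (m : R) : Prop :=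
  (forall v, cover1 A v -> m <= v) /\
  (forall e, 0 < e -> exists v, cover1 A v /\ v < m + e).

Definition outer1 (A : R -> Prop) : R := epsilon (inhabits 0) (is_outer1 A).

(* Caratheodory measurability (tested on sets of finite outer measure) *)
Definition measurable1 (A : R -> Prop) : Prop :=
  forall E me, is_outer1 E me ->
    exists m1 m2, is_outer1 (fun x => E x /\ A x) m1 /\
                  is_outer1 (fun x => E x /\ ~ A x) m2 /\ me = m1 + m2.

Definition cover2 (A : R * R -> Prop) (v : R) : Prop :=
  exists a b c d : nat -> R,
    (forall n, a n <= b n /\ c n <= d n) /\
    (forall p, A p -> exists n, a n <= fst p < b n /\ c n <= snd p < d n) /\
    infinite_sum (fun n => (b n - a n) * (d n - c n)) v.

Definition is_outer2 (A : R * R -> Prop) (m : R) : Prop :=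
  (forall v, cover2 A v -> m <= v) /\
  (forall e, 0 < e -> exists v, cover2 A v /\ v < m + e).

Definition outer2 (A : R * R -> Prop) : R := epsilon (inhabits 0) (is_outer2 A).

Definition dyad (k j : nat) (x : R) : Prop :=
  INR j / 2 ^ k <= x < (INR j + 1) / 2 ^ k.

Definition wd (m : nat) : R := / 2 ^ m.

(* a parallelogram P(I,s,b): I = dyad pk pj, s = dyad (m - pk) ps, offset pb *)
Record prl := mkP { pk : nat; pj : nat; ps : nat; pb : R }.

(* level of the slope: k(I) = log2(|I|/w) = m - pk *)
Definition slk (m : nat) (P : prl) : nat := (m - pk P)%nat.

Definition slope_set (m : nat) (P : prl) : R -> Prop := dyad (slk m P) (ps P).

Definition cs (m : nat) (P : prl) : R := (INR (ps P) + / 2) / 2 ^ (slk m P).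

Definition Lp (P : prl) : R := / 2 ^ (pk P).

Definition par_set (m : nat) (P : prl) (p : R * R) : Prop :=
  dyad (pk P) (pj P) (fst p) /\
  pb P <= snd p - cs m P * fst p < pb P + wd m.

Definition fiveR (m : nat) (P : prl) (p : R * R) : Prop :=
  let x0 := (INR (pj P) + / 2) / 2 ^ (pk P) in
  let c := cs m P in
  let y0 := c * x0 + pb P + wd m / 2 in
  Rabs (fst p - x0) <= 5 / 2 * Lp P /\
  Rabs (snd p - y0 - c * (fst p - x0)) <= 5 / 2 * wd m.

(* Pop_I(s) for I = dyad k j, s = dyad sk sj; u x is the index of u(x) in S_m *)
Definition Pop (m : nat) (u : R -> nat) (k j sk sj : nat) : R :=
  outer1 (fun x => dyad k j x /\
                   (forall y, dyad m (u x) y -> dyad sk sj y)) / (/ 2 ^ k).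

Definition inRcal (delta : R) (m : nat) (u : R -> nat) (P : prl) : Prop :=
  (pk P <= m)%nat /\ (pj P < 2 ^ pk P)%nat /\ (ps P < 2 ^ slk m P)%nat /\
  Pop m u (pk P) (pj P) (slk m P) (ps P) >= delta.

Record state := mkS { St : prl -> Prop; S1 : prl -> Prop; S2 : prl -> Prop }.

Definition covered5 (m : nat) (A : prl -> Prop) (P : prl) : Prop :=
  forall p, par_set m P p -> exists Q, A Q /\ fiveR m Q p.

Definition sel_step (m : nat) (s s' : state) : Prop :=
  exists R0, St s R0 /\ (forall R', St s R' -> Lp R' <= Lp R0) /\
    (forall X, S1 s' X <-> S1 s X \/ X = R0) /\
    (forall X, S2 s' X <-> S2 s X \/
                 (St s X /\ X <> R0 /\ covered5 m (S1 s') X)) /\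
    (forall X, St s' X <-> St s X /\ X <> R0 /\ ~ covered5 m (S1 s') X).

Definition selection (m : nat) (Rt : list prl) (R1 R2 : prl -> Prop) : Prop :=
  exists s, clos_refl_trans_1n state (sel_step m)
              (mkS (fun X => In X Rt) (fun _ => False) (fun _ => False)) s /\
            (forall X, ~ St s X) /\
            (forall X, S1 s X <-> R1 X) /\ (forall X, S2 s X <-> R2 X).

Definition sum_area (m : nat) (l : list prl) : R :=
  fold_right (fun P acc => outer2 (par_set m P) + acc) 0 l.

(* The selection procedure is analysed through an invariant [sel_inv] of its
   states (R~, R1, R2), preserved by each iteration of the loop.  Conclusion
   (i) splits into the partition property, read off the invariant, and the
   measure bound: each discarded parallelogram lies in the union of the 5R,
   R in R1, and a 5-fold enlargement multiplies outer measure by at most 25.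
   Conclusion (ii) is an invariant clause; its preservation rests on the
   geometric lemma [engulf]: a parallelogram meeting a longer one whose slope
   is contained in its own is swallowed by the 5-fold enlargement of the
   longer one, hence would already have been discarded. *)

From Stdlib Require Import Reals Lra Lia List ClassicalEpsilon Relations Classical.
Open Scope R_scope.

(** * Series of reals *)

Lemma Un_cv_ext (u v : nat -> R) (l : R) :
  (forall n, u n = v n) -> Un_cv u l -> Un_cv v l.
Proof.
  intros Huv Hu eps Heps. destruct (Hu eps Heps) as [N HN].
  exists N. intros n Hn. rewrite <- Huv. now apply HN.
Qed.

Lemma isum_ext (f g : nat -> R) (v : R) :
  (forall n, f n = g n) -> infinite_sum f v -> infinite_sum g v.
Proof.
  intros Hfg. apply Un_cv_ext. intro n. apply sum_eq. auto.
Qed.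

Lemma isum_nonneg (f : nat -> R) (v : R) :
  (forall n, 0 <= f n) -> infinite_sum f v -> 0 <= v.
Proof.
  intros Hf Hs. apply Rle_trans with (f 0%nat); [apply Hf|].
  exact (sum_incr f 0 v Hs Hf).
Qed.

Lemma isum_scal (f : nat -> R) (v k : R) :
  infinite_sum f v -> infinite_sum (fun n => k * f n) (k * v).
Proof.
  intros Hf.
  assert (Hk : Un_cv (fun _ => k) k).
  { intros eps Heps. exists 0%nat. intros n _. rewrite Rdist_eq. lra. }
  apply (Un_cv_ext (fun n => k * sum_f_R0 f n)); [|exact (CV_mult _ _ _ _ Hk Hf)].
  intro n. rewrite scal_sum. apply sum_eq. intros i _. ring.
Qed.

Definition interleave (f g : nat -> R) (n : nat) : R :=
  if Nat.even n then f (Nat.div2 n) else g (Nat.div2 n).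

Lemma interleave_even (f g : nat -> R) (n : nat) : interleave f g (2 * n) = f n.
Proof. unfold interleave. now rewrite Nat.even_even, Nat.div2_double. Qed.

Lemma interleave_odd (f g : nat -> R) (n : nat) : interleave f g (S (2 * n)) = g n.
Proof.
  unfold interleave. replace (S (2 * n)) with (2 * n + 1)%nat by lia.
  now rewrite Nat.even_odd, Nat.div2_odd'.
Qed.

Lemma sum_interleave (f g : nat -> R) (n : nat) :
  sum_f_R0 (interleave f g) (S (2 * n)) = sum_f_R0 f n + sum_f_R0 g n /\
  sum_f_R0 (interleave f g) (2 * S n) = sum_f_R0 f (S n) + sum_f_R0 g n.
Proof.
  assert (Heven : forall k, sum_f_R0 (interleave f g) (2 * S k) =
            sum_f_R0 (interleave f g) (S (2 * k)) + f (S k)).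
  { intro k. replace (2 * S k)%nat with (S (S (2 * k))) at 1 by lia.
    rewrite tech5. replace (S (S (2 * k))) with (2 * S k)%nat by lia.
    now rewrite interleave_even. }
  induction n as [|n [IHodd _]].
  - split; [|rewrite Heven]; simpl; unfold interleave; simpl; ring.
  - assert (Hodd : sum_f_R0 (interleave f g) (S (2 * S n)) =
                   sum_f_R0 f (S n) + sum_f_R0 g (S n)).
    { rewrite tech5, Heven, IHodd, interleave_odd, !tech5. ring. }
    split; [exact Hodd|]. rewrite Heven, Hodd, (tech5 f (S n)). ring.
Qed.

Lemma isum_interleave (f g : nat -> R) (vf vg : R) :
  infinite_sum f vf -> infinite_sum g vg -> infinite_sum (interleave f g) (vf + vg).
Proof.
  intros Hf Hg eps Heps.
  destruct (Hf (eps / 2)) as [Nf HNf]; [lra|].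
  destruct (Hg (eps / 2)) as [Ng HNg]; [lra|].
  exists (2 * (Nf + Ng) + 2)%nat. intros k Hk.
  destruct (even_odd_cor k) as [n [Ek|Ek]]; subst k.
  - destruct n as [|n]; [lia|]. rewrite (proj2 (sum_interleave f g n)).
    eapply Rle_lt_trans; [apply Rdist_plus|].
    specialize (HNf (S n) ltac:(lia)). specialize (HNg n ltac:(lia)). lra.
  - rewrite (proj1 (sum_interleave f g n)).
    eapply Rle_lt_trans; [apply Rdist_plus|].
    specialize (HNf n ltac:(lia)). specialize (HNg n ltac:(lia)). lra.
Qed.

(** * Countable covers of planar sets by half-open rectangles *)

Lemma cover2_nonneg (A : R * R -> Prop) (v : R) : cover2 A v -> 0 <= v.
Proof.
  intros (a & b & c & d & Hle & _ & Hsum). apply (isum_nonneg _ _) in Hsum; auto.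
  intro n. destruct (Hle n). apply Rmult_le_pos; lra.
Qed.

Lemma cover2_sub (A B : R * R -> Prop) (v : R) :
  (forall p, A p -> B p) -> cover2 B v -> cover2 A v.
Proof.
  intros HAB (a & b & c & d & Hle & Hcov & Hsum). exists a, b, c, d. split; auto.
Qed.

(* A single rectangle, padded with empty ones. *)
Lemma cover2_rect (a b c d : R) : a <= b -> c <= d ->
  cover2 (fun p => a <= fst p < b /\ c <= snd p < d) ((b - a) * (d - c)).
Proof.
  intros Hab Hcd.
  exists (fun n => match n with O => a | _ => 0 end), (fun n => match n with O => b | _ => 0 end),
    (fun n => match n with O => c | _ => 0 end), (fun n => match n with O => d | _ => 0 end).
  split; [|split].
  - intros [|n]; lra.
  - intros p Hp. exists 0%nat. exact Hp.
  - intros eps Heps. exists 0%nat. intros n _.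
    replace (sum_f_R0 _ n) with ((b - a) * (d - c)); [rewrite Rdist_eq; lra|].
    induction n as [|n IH]; simpl in *; [ring|rewrite <- IH; ring].
Qed.

Lemma cover2_union (A B : R * R -> Prop) (vA vB : R) :
  cover2 A vA -> cover2 B vB -> cover2 (fun p => A p \/ B p) (vA + vB).
Proof.
  intros (a1 & b1 & c1 & d1 & H1 & H2 & H3) (a2 & b2 & c2 & d2 & G1 & G2 & G3).
  exists (interleave a1 a2), (interleave b1 b2), (interleave c1 c2), (interleave d1 d2).
  split; [|split].
  - intro n. unfold interleave. destruct (Nat.even n); auto.
  - intros p [Hp|Hp].
    + destruct (H2 p Hp) as [n Hn]. exists (2 * n)%nat. now rewrite !interleave_even.
    + destruct (G2 p Hp) as [n Hn]. exists (S (2 * n)). now rewrite !interleave_odd.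
  - eapply isum_ext; [|exact (isum_interleave _ _ _ _ H3 G3)].
    intro n. unfold interleave. now destruct (Nat.even n).
Qed.

Definition dilate (t cx cy : R) (A : R * R -> Prop) (p : R * R) : Prop :=
  A (cx + (fst p - cx) / t, cy + (snd p - cy) / t).

Lemma cover2_dilate (t cx cy : R) (A : R * R -> Prop) (v : R) :
  0 < t -> cover2 A v -> cover2 (dilate t cx cy A) (t * t * v).
Proof.
  intros Ht (a & b & c & d & Hle & Hcov & Hsum).
  exists (fun n => cx + t * (a n - cx)), (fun n => cx + t * (b n - cx)),
    (fun n => cy + t * (c n - cy)), (fun n => cy + t * (d n - cy)).
  split; [|split].
  - intro n. destruct (Hle n). split; nra.
  - intros [x y] Hp. destruct (Hcov _ Hp) as [n Hn]. exists n. simpl in *.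
    replace x with (cx + t * ((x - cx) / t)) by (field; lra).
    replace y with (cy + t * ((y - cy) / t)) by (field; lra).
    set (zx := (x - cx) / t) in *. set (zy := (y - cy) / t) in *.
    destruct Hn as [[Ha Hb] [Hc Hd]]. split; split; nra.
  - eapply isum_ext; [|exact (isum_scal _ _ (t * t) Hsum)]. intro n. simpl. ring.
Qed.

(** * The planar outer measure [outer2] *)

Definition coverable (A : R * R -> Prop) : Prop := exists v, cover2 A v.

(* For a coverable set the infimum defining [outer2] exists (completeness of R). *)
Lemma outer2_spec (A : R * R -> Prop) : coverable A -> is_outer2 A (outer2 A).
Proof.
  intros [v0 Hv0]. unfold outer2. apply epsilon_spec.
  set (E := fun x => cover2 A (- x)).
  assert (Hb : bound E).
  { exists 0. intros x Hx. apply cover2_nonneg in Hx. lra. }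
  assert (He : exists x, E x).
  { exists (- v0). unfold E. now rewrite Ropp_involutive. }
  destruct (completeness E Hb He) as [l [Hub Hleast]].
  exists (- l). split.
  - intros v Hv. assert (Ev : E (- v)) by (unfold E; now rewrite Ropp_involutive).
    apply Hub in Ev. lra.
  - intros e He0. apply NNPP. intro Hno.
    assert (Hub' : is_upper_bound E (l - e)).
    { intros x Hx. apply Rnot_lt_le. intro Hlt. apply Hno.
      exists (- x). split; [exact Hx|lra]. }
    apply Hleast in Hub'. lra.
Qed.

Lemma outer2_le_cover (A : R * R -> Prop) (v : R) : cover2 A v -> outer2 A <= v.
Proof. intro Hv. apply (outer2_spec A); [exists v|]; exact Hv. Qed.

Lemma outer2_nonneg (A : R * R -> Prop) : coverable A -> 0 <= outer2 A.
Proof.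
  intro HA. apply Rnot_lt_le. intro Hneg.
  destruct (proj2 (outer2_spec A HA) (- outer2 A)) as [v [Hv Hlt]]; [lra|].
  apply cover2_nonneg in Hv. lra.
Qed.

Lemma outer2_le_approx (A B : R * R -> Prop) (k c : R) :
  coverable B -> 0 <= k ->
  (forall v, cover2 B v -> outer2 A <= k * v + c) -> outer2 A <= k * outer2 B + c.
Proof.
  intros HB Hk Hbound. apply Rnot_lt_le. intro Hlt.
  set (e := outer2 A - (k * outer2 B + c)).
  destruct (proj2 (outer2_spec B HB) (e / (k + 1))) as [v [Hv Hvlt]].
  { apply Rdiv_lt_0_compat; unfold e; lra. }
  specialize (Hbound v Hv).
  assert (Hke : k * (e / (k + 1)) < e).
  { apply (Rmult_lt_reg_r (k + 1)); [lra|].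
    replace (k * (e / (k + 1)) * (k + 1)) with (k * e) by (field; lra). unfold e; nra. }
  assert (k * v <= k * (outer2 B + e / (k + 1))) by (apply Rmult_le_compat_l; lra).
  unfold e in *. lra.
Qed.

Lemma outer2_mono (A B : R * R -> Prop) :
  (forall p, A p -> B p) -> coverable B -> outer2 A <= outer2 B.
Proof.
  intros HAB HB. rewrite <- (Rmult_1_l (outer2 B)), <- (Rplus_0_r (_ * _)).
  apply outer2_le_approx; [exact HB|lra|].
  intros v Hv. rewrite Rmult_1_l, Rplus_0_r. apply outer2_le_cover.
  exact (cover2_sub _ _ _ HAB Hv).
Qed.

Lemma outer2_union (A B : R * R -> Prop) : coverable A -> coverable B ->
  coverable (fun p => A p \/ B p) /\
  outer2 (fun p => A p \/ B p) <= outer2 A + outer2 B.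
Proof.
  intros [vA HA] [vB HB]. split; [exists (vA + vB); exact (cover2_union _ _ _ _ HA HB)|].
  rewrite <- (Rmult_1_l (outer2 A)).
  apply outer2_le_approx; [exists vA; exact HA|lra|]. intros wA HwA.
  rewrite Rplus_comm, <- (Rmult_1_l (outer2 B)).
  apply outer2_le_approx; [exists vB; exact HB|lra|]. intros wB HwB.
  rewrite !Rmult_1_l, Rplus_comm. apply outer2_le_cover. exact (cover2_union _ _ _ _ HwA HwB).
Qed.

Lemma outer2_dilate (t cx cy : R) (A : R * R -> Prop) : 0 < t -> coverable A ->
  coverable (dilate t cx cy A) /\ outer2 (dilate t cx cy A) <= t * t * outer2 A.
Proof.
  intros Ht [v Hv]. split; [exists (t * t * v); exact (cover2_dilate _ _ _ _ _ Ht Hv)|].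
  rewrite <- (Rplus_0_r (_ * _)).
  apply outer2_le_approx; [exists v; exact Hv|nra|]. intros w Hw.
  rewrite Rplus_0_r. apply outer2_le_cover. exact (cover2_dilate _ _ _ _ _ Ht Hw).
Qed.

(** * Parallelograms and their 5-fold enlargements *)

Lemma inv_pow2_pos (k : nat) : 0 < / 2 ^ k.
Proof. apply Rinv_0_lt_compat, pow_lt. lra. Qed.

Definition ctr_x (P : prl) : R := (INR (pj P) + / 2) / 2 ^ (pk P).
Definition ctr_y (m : nat) (P : prl) : R := cs m P * ctr_x P + pb P + wd m / 2.

(* A parallelogram is bounded, hence coverable by one rectangle. *)
Lemma par_coverable (m : nat) (Q : prl) : coverable (par_set m Q).
Proof.
  set (L := / 2 ^ pk Q). assert (HL : 0 < L) by apply inv_pow2_pos.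
  assert (Hw : 0 < wd m) by apply inv_pow2_pos.
  set (c := cs m Q). set (K := Rabs c * ((INR (pj Q) + 1) * L)).
  pose proof (pos_INR (pj Q)) as Hj.
  assert (HK : 0 <= K) by (unfold K; apply Rmult_le_pos; [apply Rabs_pos|nra]).
  eexists. eapply cover2_sub; [|apply (cover2_rect (INR (pj Q) * L) ((INR (pj Q) + 1) * L)
     (pb Q - K - 1) (pb Q + wd m + K + 1)); nra].
  intros [x y] [Hx Hy]. unfold dyad, Rdiv in Hx. simpl in *. fold L in Hx. fold c in Hy.
  assert (Hcx : Rabs (c * x) <= K).
  { unfold K. rewrite Rabs_mult. apply Rmult_le_compat_l; [apply Rabs_pos|].
    rewrite Rabs_pos_eq; nra. }
  pose proof (Rle_abs (c * x)). pose proof (Rle_abs (- (c * x))). rewrite Rabs_Ropp in *.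
  split; lra.
Qed.

Lemma fiveR_in_dilate (m : nat) (Q : prl) (t : R) (p : R * R) : 5 < t -> fiveR m Q p ->
  dilate t (ctr_x Q) (ctr_y m Q) (par_set m Q) p.
Proof.
  intros Ht [Hx Hy]. fold (ctr_x Q) in Hx, Hy. fold (ctr_y m Q) in Hy.
  unfold dilate, par_set, dyad, Lp in *. simpl.
  assert (HL := inv_pow2_pos (pk Q)). assert (Hw : 0 < wd m) by apply inv_pow2_pos.
  set (zx := (fst p - ctr_x Q) / t). set (zy := (snd p - ctr_y m Q) / t).
  assert (Hzx : Rabs zx < / 2 ^ pk Q / 2).
  { unfold zx, Rdiv. rewrite Rabs_mult, Rabs_inv, (Rabs_pos_eq t) by lra.
    apply (Rmult_lt_reg_r t); [lra|]. rewrite Rmult_assoc, Rinv_l by lra. nra. }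
  assert (Hzy : Rabs (zy - cs m Q * zx) < wd m / 2).
  { replace (zy - cs m Q * zx) with ((snd p - ctr_y m Q - cs m Q * (fst p - ctr_x Q)) / t)
      by (unfold zx, zy; field; lra).
    unfold Rdiv. rewrite Rabs_mult, Rabs_inv, (Rabs_pos_eq t) by lra.
    apply (Rmult_lt_reg_r t); [lra|]. rewrite Rmult_assoc, Rinv_l by lra. nra. }
  unfold ctr_y, ctr_x, Rdiv in *. set (L := / 2 ^ pk Q) in *. set (c := cs m Q) in *.
  apply Rabs_def2 in Hzx, Hzy. split; split; nra.
Qed.

Lemma le_sq_limit (X o a : R) : 0 <= a -> 0 <= o ->
  (forall t, a < t -> X <= t * t * o) -> X <= a * a * o.
Proof.
  intros Ha Ho Hbound. apply Rnot_lt_le. intro Hlt.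
  set (D := X - a * a * o).
  set (h := Rmin 1 (D / ((2 * a + 1) * o + 1))).
  assert (Hh1 : h <= 1) by apply Rmin_l.
  assert (HhD : h * ((2 * a + 1) * o + 1) <= D).
  { apply Rle_trans with (D / ((2 * a + 1) * o + 1) * ((2 * a + 1) * o + 1)).
    - apply Rmult_le_compat_r; [nra|apply Rmin_r].
    - right. field. nra. }
  assert (Hh0 : 0 < h).
  { apply Rmin_glb_lt; [lra|]. apply Rdiv_lt_0_compat; unfold D; nra. }
  specialize (Hbound (a + h) ltac:(lra)). unfold D in HhD. nra.
Qed.

Lemma outer2_fiveR (m : nat) (Q : prl) :
  coverable (fiveR m Q) /\ outer2 (fiveR m Q) <= 25 * outer2 (par_set m Q).
Proof.
  assert (Hdil : forall t, 5 < t ->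
            coverable (fiveR m Q) /\ outer2 (fiveR m Q) <= t * t * outer2 (par_set m Q)).
  { intros t Ht.
    destruct (outer2_dilate t (ctr_x Q) (ctr_y m Q) _ ltac:(lra) (par_coverable m Q))
      as [Hcov Hle].
    assert (Hsub := fun p => fiveR_in_dilate m Q t p Ht).
    split; [destruct Hcov as [v Hv]; exists v; eapply cover2_sub; eauto|].
    eapply Rle_trans; [apply outer2_mono; eauto|exact Hle]. }
  split; [apply (Hdil 6); lra|].
  replace 25 with (5 * 5) by ring.
  apply le_sq_limit; [lra|apply outer2_nonneg, par_coverable|].
  intros t Ht. apply Hdil, Ht.
Qed.

Definition union_fiveR (m : nat) (l : list prl) (p : R * R) : Prop :=
  exists Q, In Q l /\ fiveR m Q p.

Lemma outer2_union_fiveR (m : nat) (l : list prl) :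
  coverable (union_fiveR m l) /\ outer2 (union_fiveR m l) <= 25 * sum_area m l.
Proof.
  induction l as [|Q l [IHcov IHle]].
  - assert (Hempty : cover2 (union_fiveR m nil) 0).
    { replace 0 with ((0 - 0) * (0 - 0)) by ring.
      eapply cover2_sub; [|apply cover2_rect; lra]. intros p [Q [[] _]]. }
    split; [exists 0; exact Hempty|]. simpl. rewrite Rmult_0_r.
    exact (outer2_le_cover _ _ Hempty).
  - destruct (outer2_fiveR m Q) as [HQcov HQle].
    destruct (outer2_union _ _ HQcov IHcov) as [Ucov Ule].
    assert (Hsplit : forall p, union_fiveR m (Q :: l) p ->
               fiveR m Q p \/ union_fiveR m l p).
    { intros p [Q' [[<-|HQ'] Hp]]; [left; exact Hp|right; exists Q'; auto]. }
    split; [destruct Ucov as [v Hv]; exists v; exact (cover2_sub _ _ _ Hsplit Hv)|].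
    eapply Rle_trans; [exact (outer2_mono _ _ Hsplit Ucov)|]. simpl. lra.
Qed.

(** * Geometry of intersecting parallelograms *)

Definition meets (m : nat) (X Y : prl) : Prop :=
  exists p, par_set m X p /\ par_set m Y p.

Definition slope_incl (m : nat) (Y X : prl) : Prop :=
  forall y, slope_set m Y y -> slope_set m X y.

Lemma meets_sym (m : nat) (X Y : prl) : meets m X Y -> meets m Y X.
Proof. intros [p [HX HY]]. exists p. auto. Qed.

Lemma cs_in_slope (m : nat) (P : prl) : slope_set m P (cs m P).
Proof.
  unfold slope_set, cs, dyad, Rdiv. pose proof (inv_pow2_pos (slk m P)). split; nra.
Qed.

(* Core geometric fact: if Z meets the longer parallelogram Y and slope(Y) is
   contained in slope(Z), the two central lines drift apart by at most
   |slope(Z)|/2 * |int(Z)| = w/2 over int(Z), so Z lies inside 5Y. *)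
Lemma engulf (m : nat) (Z Y : prl) : (pk Z <= m)%nat -> Lp Z <= Lp Y ->
  meets m Z Y -> slope_incl m Y Z -> forall p, par_set m Z p -> fiveR m Y p.
Proof.
  intros Hk HL [q [[Hq1 Hq2] [Hq3 Hq4]]] Hsl p [Hp1 Hp2].
  pose proof (Hsl _ (cs_in_slope m Y)) as Hc.
  unfold fiveR, slope_set, dyad, Lp, Rdiv in *.
  assert (Hwidth : / 2 ^ pk Z * / 2 ^ slk m Z = wd m).
  { unfold wd, slk. rewrite <- Rinv_mult, <- pow_add. do 2 f_equal. lia. }
  assert (HcZ : cs m Z = (INR (ps Z) + / 2) * / 2 ^ slk m Z) by reflexivity.
  set (A := / 2 ^ pk Z) in *. set (B := / 2 ^ slk m Z) in *.
  set (cY := cs m Y) in *. set (cZ := cs m Z) in *. set (w := wd m) in *.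
  assert (HA : 0 < A) by apply inv_pow2_pos. assert (HB : 0 < B) by apply inv_pow2_pos.
  assert (Hw : 0 < w) by apply inv_pow2_pos.
  assert (Hdrift : Rabs ((cZ - cY) * (fst p - fst q)) <= w / 2).
  { rewrite Rabs_mult, <- Hwidth.
    replace (A * B / 2) with (B / 2 * A) by field.
    apply Rmult_le_compat; try apply Rabs_pos; apply Rabs_le; lra. }
  pose proof (Rle_abs ((cZ - cY) * (fst p - fst q))) as Hd1.
  pose proof (Rle_abs (- ((cZ - cY) * (fst p - fst q)))) as Hd2. rewrite Rabs_Ropp in Hd2.
  split; apply Rabs_le; [lra|].
  set (x0 := (INR (pj Y) + / 2) * / 2 ^ pk Y).
  replace (snd p - (cY * x0 + pb Y + w * / 2) - cY * (fst p - x0)) with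
    (((snd p - cZ * fst p) - (snd q - cZ * fst q)) + (cZ - cY) * (fst p - fst q)
     + ((snd q - cY * fst q) - pb Y - w * / 2)) by ring.
  split; lra.
Qed.

Lemma Lp_inj (X Y : prl) : Lp X = Lp Y -> pk X = pk Y.
Proof.
  unfold Lp. intro HL.
  assert (Hpow : 2 ^ pk X = 2 ^ pk Y).
  { rewrite <- (Rinv_inv (2 ^ pk X)), HL. apply Rinv_inv. }
  destruct (Nat.lt_trichotomy (pk X) (pk Y)) as [h|[h|h]]; [|exact h|];
    pose proof (Rlt_pow 2 _ _ ltac:(lra) h); lra.
Qed.

Lemma dyad_incl_eq (k j j' : nat) : (forall y, dyad k j y -> dyad k j' y) -> j = j'.
Proof.
  intro Hincl. unfold dyad, Rdiv in *. pose proof (inv_pow2_pos k) as Hk.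
  destruct (Hincl (INR j * / 2 ^ k)) as [H1 H2]; [split; nra|].
  apply Rmult_le_reg_r in H1; auto. apply Rmult_lt_reg_r in H2; auto.
  rewrite <- S_INR in H2. apply INR_le in H1. apply INR_lt in H2. lia.
Qed.

(* Parallelograms of equal length have slopes at the same dyadic scale. *)
Lemma slope_incl_sym (m : nat) (X Y : prl) : Lp X = Lp Y ->
  slope_incl m Y X -> slope_incl m X Y.
Proof.
  intros HL Hincl. apply Lp_inj in HL.
  unfold slope_incl, slope_set, slk in *. rewrite HL in *.
  apply dyad_incl_eq in Hincl. rewrite Hincl. auto.
Qed.

(** * The invariant of the selection procedure *)

Record sel_inv (m : nat) (Rt : list prl) (s : state) : Prop := {
  inv_cover : forall X, In X Rt <-> St s X \/ S1 s X \/ S2 s X;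
  inv_disj_t1 : forall X, ~ (St s X /\ S1 s X);
  inv_disj_t2 : forall X, ~ (St s X /\ S2 s X);
  inv_disj_12 : forall X, ~ (S1 s X /\ S2 s X);
  inv_discarded : forall X, S2 s X -> covered5 m (S1 s) X;
  (* selected parallelograms are at least as long as the remaining ones, and
     no remaining Z meets a selected Y with slope(Y) contained in slope(Z)
     (such a Z lies in 5Y, so it has been discarded) *)
  inv_selected_remaining : forall Y Z, S1 s Y -> St s Z ->
    Lp Z <= Lp Y /\ ~ (meets m Z Y /\ slope_incl m Y Z);
  inv_selected_sparse : forall X Y, S1 s X -> S1 s Y -> X <> Y ->
    meets m X Y -> Lp X <= Lp Y -> ~ slope_incl m Y X }.

Lemma sel_inv_init (m : nat) (Rt : list prl) :
  sel_inv m Rt (mkS (fun X => In X Rt) (fun _ => False) (fun _ => False)).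
Proof. constructor; simpl; tauto. Qed.

Section Step.

Variables (m : nat) (Rt : list prl) (s s' : state).
Hypothesis Hpk : forall P, In P Rt -> (pk P <= m)%nat.
Hypothesis Hinv : sel_inv m Rt s.
Hypothesis Hstep : sel_step m s s'.

Lemma sel_step_selected :
  (forall Y Z, S1 s' Y -> St s' Z -> Lp Z <= Lp Y /\ ~ (meets m Z Y /\ slope_incl m Y Z)) /\
  (forall X Y, S1 s' X -> S1 s' Y -> X <> Y -> meets m X Y -> Lp X <= Lp Y ->
     ~ slope_incl m Y X).
Proof.
  destruct Hinv as [Icov _ _ _ _ Irem Isparse].
  destruct Hstep as (R0 & HR0 & Hmax & HS1 & _ & HSt). split.
  - intros Y Z HY HZ. apply HSt in HZ as (HZ & _ & Hnot5).
    apply HS1 in HY; destruct HY as [HY| ->]; [exact (Irem Y Z HY HZ)|].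
    split; [exact (Hmax Z HZ)|]. intros [Hmeet Hsl]. apply Hnot5.
    intros p Hp. exists R0. split; [apply HS1; right; reflexivity|].
    eapply engulf; eauto. apply Hpk, Icov. auto.
  - intros X Y HX HY HXY Hmeet HL.
    apply HS1 in HX, HY. destruct HX as [HX| ->], HY as [HY| ->].
    + exact (Isparse X Y HX HY HXY Hmeet HL).
    + destruct (Irem X R0 HX HR0) as [HL' Hno]. intro Hsl. apply Hno.
      split; [exact (meets_sym _ _ _ Hmeet)|]. apply slope_incl_sym; [lra|exact Hsl].
    + destruct (Irem Y R0 HY HR0) as [_ Hno]. intro Hsl. apply Hno. auto.
    + contradiction.
Qed.

Lemma sel_inv_step : sel_inv m Rt s'.
Proof.
  destruct sel_step_selected as [Hrem Hsparse].
  destruct Hinv as [Icov Idt1 Idt2 Id12 Idisc _ _].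
  destruct Hstep as (R0 & HR0 & _ & HS1 & HS2 & HSt).
  constructor; [| | | | |exact Hrem|exact Hsparse].
  - intro X. rewrite Icov, HS1, HS2, HSt. split.
    + intros [H|[H|H]]; [|tauto|tauto].
      destruct (classic (X = R0)); [tauto|].
      destruct (classic (covered5 m (S1 s') X)); tauto.
    + intros [H|[[H| ->]|[H|H]]]; tauto.
  - intros X [Ht H1]. apply HSt in Ht as (Ht & Hne & _).
    apply HS1 in H1 as [H1|H1]; [exact (Idt1 X (conj Ht H1))|contradiction].
  - intros X [Ht H2]. apply HSt in Ht as (Ht & _ & Hnot5).
    apply HS2 in H2 as [H2|H2]; [exact (Idt2 X (conj Ht H2))|tauto].
  - intros X [H1 H2]. apply HS1 in H1. apply HS2 in H2.
    destruct H1 as [H1| ->], H2 as [H2|H2].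
    + exact (Id12 X (conj H1 H2)).
    + exact (Idt1 X (conj (proj1 H2) H1)).
    + exact (Idt2 R0 (conj HR0 H2)).
    + tauto.
  - intros X HX. apply HS2 in HX as [HX|HX]; [|tauto].
    intros p Hp. destruct (Idisc X HX p Hp) as [Q [HQ Hfive]].
    exists Q. split; [apply HS1; left|]; assumption.
Qed.

End Step.

Lemma sel_inv_trace (m : nat) (Rt : list prl) (s s' : state) :
  (forall P, In P Rt -> (pk P <= m)%nat) ->
  clos_refl_trans_1n state (sel_step m) s s' -> sel_inv m Rt s -> sel_inv m Rt s'.
Proof.
  intros Hpk Htrace. induction Htrace as [|s s1 s' Hstep _ IH]; [auto|].
  intro Hinv. apply IH. exact (sel_inv_step m Rt s s1 Hpk Hinv Hstep).
Qed.

Theorem mainTheorem4 (delta : R) (m : nat) (u : R -> nat)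
  (Rt : list prl) (R1 R2 : prl -> Prop) :
  0 < delta <= 1 ->
  (1 <= m)%nat ->
  (forall x, 0 <= x < 1 -> (u x < 2 ^ m)%nat) ->
  (forall j, measurable1 (fun x => 0 <= x < 1 /\ u x = j)) ->
  (forall P, In P Rt -> inRcal delta m u P) ->
  selection m Rt R1 R2 ->
  ((forall P, In P Rt <-> R1 P \/ R2 P) /\
   (forall P, ~ (R1 P /\ R2 P)) /\
   (forall l1, NoDup l1 -> (forall P, In P l1 <-> R1 P) ->
      outer2 (fun p => exists P, R2 P /\ par_set m P p) <= 25 * sum_area m l1)) /\
  (forall P P', R1 P -> R1 P' -> P <> P' ->
     (exists p, par_set m P p /\ par_set m P' p) ->
     Lp P <= Lp P' ->
     ~ (forall y, slope_set m P' y -> slope_set m P y)).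
Proof.
  intros _ _ _ _ HRcal [s [Htrace [Hdone [HS1 HS2]]]].
  assert (Hpk : forall P, In P Rt -> (pk P <= m)%nat) by (intros P HP; apply HRcal, HP).
  destruct (sel_inv_trace m Rt _ _ Hpk Htrace (sel_inv_init m Rt))
    as [Icov _ _ Id12 Idisc _ Isparse].
  split; [split; [|split]|].
  - intro P. rewrite Icov, HS1, HS2. specialize (Hdone P). tauto.
  - intros P [H1 H2]. apply (Id12 P). split; [apply HS1|apply HS2]; assumption.
  - (* every point of a discarded R lies in some 5R' with R' selected *)
    intros l1 _ Hl1. destruct (outer2_union_fiveR m l1) as [Hcov Hle].
    eapply Rle_trans; [|exact Hle]. apply outer2_mono; [|exact Hcov].
    intros p [P [HP Hp]]. apply HS2 in HP. destruct (Idisc P HP p Hp) as [Q [HQ Hfive]].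
    exists Q. split; [apply Hl1, HS1|]; assumption.
  - intros P P' HP HP' Hne Hmeet HL. apply HS1 in HP, HP'.
    exact (Isparse P P' HP HP' Hne Hmeet HL).
Qed.
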